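(* Let $k$ be even, $1\le s\le k-1$, and let $G$ be a $k$-uniform $s$-cycle with $m$ edges and $n=m(k-s)$ vertices. Assume that $k=q(k-s)$ for some integer $q$, and write $q=2^{t_0}(2l_0+1)$ with nonnegative integers $t_0,l_0$. Then $G$ is odd-bipartite if and only if $m$ is a multiple of $2^{t_0}$.
   Context: A $k$-uniform $s$-cycle with $m$ edges has vertex set $\mathbb{Z}_n$, $n=m(k-s)$ (vertex $n+i$ identified with $i$), and edges $e_j=\{j(k-s)+1,\ldots,j(k-s)+k\}$, $j=0,\ldots,m-1$; it is assumed that $n\ge 2k-s$. A $k$-uniform hypergraph with $k$ even and vertex set $V$ is odd-bipartite if either it has no edges or there is a partition $V=V_1\cup V_2$ with $V_1,V_2\ne\emptyset$ such that every edge intersects $V_1$ in an odd number of vertices. *)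

From mathcomp Require Import all_boot.
Set Implicit Arguments. Unset Strict Implicit. Unset Printing Implicit Defensive.

Definition odd_bipartite (V : finType) (E : seq {set V}) : Prop :=
  E = [::] \/
  exists V1 : {set V},
    [/\ V1 != set0, ~: V1 != set0 & forall e, e \in E -> odd #|e :&: V1|].

(* Vertex set Z_n, n = m(k-s), represented by 'I_(m*(k-s)); the paper's vertex
   label x (with vertex n+i identified with i) is the residue x mod n. *)
Definition scycle_edge (k s m j : nat) : {set 'I_(m * (k - s))} :=
  [set v : 'I_(m * (k - s)) |
     [exists i : 'I_k, val v == (j * (k - s) + i.+1) %% (m * (k - s))]].

Definition scycle (k s m : nat) : seq {set 'I_(m * (k - s))} :=
  [seq scycle_edge k s m j | j <- iota 0 m].

From mathcomp Require Import all_boot zify.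
Set Implicit Arguments. Unset Strict Implicit. Unset Printing Implicit Defensive.

(* Cut Z_n into the m blocks {j(k-s)+1, ..., (j+1)(k-s)}; edge e_j is the union
   of the q consecutive blocks j, ..., j+q-1.  If V1 meets every edge oddly,
   comparing e_j and e_(j+1) shows that the parity of |V1 ∩ block j| is
   q-periodic; it is also m-periodic, hence gcd(q,m)-periodic, so the odd count
   |V1 ∩ e_0| equals (q / gcd(q,m)) times a block-parity sum mod 2, forcing
   q / gcd(q,m) to be odd and thus 2^t0 | gcd(q,m) | m.  Conversely, if
   2^t0 | m then the multiples of 2^t0 (k-s) form a well-defined subset of Z_n
   and every edge, an interval of length k = 2^t0 (k-s) (2 l0 + 1), contains
   exactly 2 l0 + 1 of them. *)

Definition periodic (B : nat -> bool) p := forall j, B (j + p) = B j.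

Lemma periodic_mull B p t : periodic B p -> periodic B (t * p).
Proof.
move=> PB; elim: t => [|t IH] j; first by rewrite addn0.
by rewrite mulSn addnA IH PB.
Qed.

Lemma periodic_gcdn B a b : periodic B a -> periodic B b -> periodic B (gcdn a b).
Proof.
move=> Pa Pb; have [->|a_gt0] := posnP a; first by rewrite gcd0n.
have [u _ /dvdnP[v Ev]] := Bezoutl b a_gt0.
by move=> j; rewrite -(periodic_mull u Pb) -addnA Ev periodic_mull.
Qed.

Lemma odd_sum I (r : seq I) (P : pred I) (F : I -> nat) :
  odd (\sum_(i <- r | P i) F i) = \big[addb/false]_(i <- r | P i) odd (F i).
Proof. exact: (big_morph odd oddD). Qed.

Lemma addb_big_periodic B g t : periodic B g ->
  \big[addb/false]_(i < t * g) B i = odd t && \big[addb/false]_(i < g) B i.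
Proof.
move=> PB; elim: t => [|t IH]; first by rewrite big_ord0.
rewrite mulSnr big_split_ord /= IH.
under eq_bigr => i _ do rewrite addnC periodic_mull //.
by case: (odd t); case: (\big[addb/false]_(i < g) B i).
Qed.

(* Sliding a window of length q by one step adds f (j + q) and drops f j. *)
Lemma odd_windows_periodic (f : nat -> nat) q :
  (forall j, odd (\sum_(r < q) f (j + r))) -> periodic (fun j => odd (f j)) q.
Proof.
move=> odd_window j /=.
have slide : f j + \sum_(r < q) f (j.+1 + r) = \sum_(r < q) f (j + r) + f (j + q).
  transitivity (\sum_(r < q.+1) f (j + r)); last by rewrite big_ord_recr.
  rewrite big_ord_recl addn0; congr (_ + _).
  by apply: eq_bigr => r _; rewrite lift0 addnS.
have := congr1 odd slide; rewrite !oddD !odd_window.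
by case: (odd (f j)); case: (odd (f (j + q))).
Qed.

Lemma odd_window_quotient (f : nat -> nat) q g :
  periodic (fun j => odd (f j)) g -> g %| q -> odd (\sum_(r < q) f r) ->
  odd (q %/ g).
Proof.
move=> Pg /dvdnP[t ->]; rewrite odd_sum (addb_big_periodic _ Pg) => /andP[odd_t odd_g].
case: (posnP g) odd_g => [-> | g_gt0 _]; first by rewrite big_ord0.
by rewrite mulnK.
Qed.

Lemma pow2_dvdn_odd_quotient t q g :
  2 ^ t %| q -> g %| q -> odd (q %/ g) -> 2 ^ t %| g.
Proof.
move=> dvd_q /divnK qE odd_qg; move: dvd_q.
by rewrite -qE Gauss_dvdr // coprimeXl // coprime2n.
Qed.

Definition inmod n (A : {set 'I_n}) (x : nat) : bool :=
  [exists v in A, val v == x %% n].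

Lemma inmodE n (A : {set 'I_n}) (v : 'I_n) x : val v = x %% n -> inmod A x = (v \in A).
Proof.
move=> vx; apply/existsP/idP => [[w /andP[wA /eqP wx]] | vA].
  by have -> : v = w by apply: val_inj; rewrite vx wx.
by exists v; rewrite vA vx eqxx.
Qed.

Lemma inmodDr n (A : {set 'I_n}) x : inmod A (x + n) = inmod A x.
Proof. by rewrite /inmod modnDr. Qed.

Lemma inmodT n x : 0 < n -> inmod [set: 'I_n] x.
Proof. by move=> n_gt0; rewrite (inmodE _ (v := Ordinal (ltn_pmod x n_gt0))) ?inE. Qed.

Lemma card_scycle_edgeI k s m j (A : {set 'I_(m * (k - s))}) :
  0 < k <= m * (k - s) ->
  #|scycle_edge k s m j :&: A| = \sum_(i < k) inmod A (j * (k - s) + i.+1).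
Proof.
set n := m * (k - s) => /andP[k_gt0 kn].
have n_gt0 : 0 < n := leq_trans k_gt0 kn.
pose vertex (i : 'I_k) : 'I_n := Ordinal (ltn_pmod (j * (k - s) + i.+1) n_gt0).
have vertex_inj : injective vertex.
  move=> a b /(congr1 val)/eqP; rewrite /= eqn_modDl -addn1 -[b.+1]addn1 eqn_modDr.
  by rewrite !modn_small ?(leq_trans _ kn) // => /eqP/val_inj.
have -> : scycle_edge k s m j :&: A = vertex @: [set i | vertex i \in A].
  apply/setP => v; rewrite !inE; apply/andP/imsetP => [[/existsP[i /eqP vi] vA] | [i]].
    have vE : v = vertex i by apply: val_inj.
    by exists i; rewrite // inE -vE.
  by rewrite inE => iA ->; split => //; apply/existsP; exists i.
rewrite card_imset // -sum1_card big_mkcond /=.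
by apply: eq_bigr => i _; rewrite inE (inmodE _ (v := vertex i)) //; case: (vertex i \in A).
Qed.

Lemma card_scycle_edge k s m j : 0 < k <= m * (k - s) -> #|scycle_edge k s m j| = k.
Proof.
move=> kn; have n_gt0 : 0 < m * (k - s) by case/andP: kn => /leq_trans; apply.
rewrite -[scycle_edge _ _ _ _]setIT card_scycle_edgeI //.
under eq_bigr do rewrite inmodT //.
by rewrite sum_nat_const card_ord muln1.
Qed.

Lemma scycle_edge_modn k s m j : scycle_edge k s m (j %% m) = scycle_edge k s m j.
Proof.
apply/setP => v; rewrite !inE; apply: eq_existsb => i.
have -> : j * (k - s) + i.+1 = j %/ m * (m * (k - s)) + (j %% m * (k - s) + i.+1).
  by rewrite addnA mulnA -mulnDl -divn_eq.
by rewrite modnMDl.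
Qed.

Lemma scycle_edge_in k s m j : 0 < m -> scycle_edge k s m j \in scycle k s m.
Proof.
move=> m_gt0; rewrite -scycle_edge_modn; apply: map_f.
by rewrite mem_iota add0n ltn_pmod.
Qed.

Lemma mem_scycle k s m e :
  e \in scycle k s m -> exists2 j, j < m & e = scycle_edge k s m j.
Proof. by case/mapP => j; rewrite mem_iota add0n => /andP[_ jm] ->; exists j. Qed.

(* Both parts of the partition are automatically nonempty since every edge is
   met oddly by V1 and has the even size k. *)
Lemma scycle_odd_bipartiteP k s m : ~~ odd k -> 0 < k <= m * (k - s) ->
  odd_bipartite (scycle k s m) <->
  exists A, forall j, odd #|scycle_edge k s m j :&: A|.
Proof.
move=> even_k kn.
have m_gt0 : 0 < m by case/andP: kn => /leq_trans/[apply]; rewrite muln_gt0 => /andP[].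
split=> [[E0 | [A [_ _ odd_A]]] | [A odd_A]].
- by have := scycle_edge_in k s 0 m_gt0; rewrite E0.
- by exists A => j; apply/odd_A/scycle_edge_in.
right; exists A; split; last by move=> e /mem_scycle[j _ ->].
  by apply: contraTneq (odd_A 0) => ->; rewrite setI0 cards0.
apply: contraTneq (odd_A 0) => /(congr1 (@setC _)); rewrite setCK setC0 => ->.
by rewrite setIT card_scycle_edge.
Qed.

Definition block_card n (A : {set 'I_n}) d j := \sum_(i < d) inmod A (j * d + i.+1).

Lemma sum_ord_mull (F : nat -> nat) q d :
  \sum_(i < q * d) F i = \sum_(r < q) \sum_(i < d) F (r * d + i).
Proof.
elim: q => [|q IH]; first by rewrite mul0n !big_ord0.
by rewrite mulSnr big_split_ord big_ord_recr /= IH.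
Qed.

Lemma card_scycle_edge_blocks k s m q j (A : {set 'I_(m * (k - s))}) :
  0 < k <= m * (k - s) -> k = q * (k - s) ->
  #|scycle_edge k s m j :&: A| = \sum_(r < q) block_card A (k - s) (j + r).
Proof.
move=> kn kE; rewrite card_scycle_edgeI //.
transitivity (\sum_(i < q * (k - s)) inmod A (j * (k - s) + i.+1)); first by rewrite -kE.
rewrite (sum_ord_mull (fun i => inmod A (j * (k - s) + i.+1))).
apply: eq_bigr => r _; apply: eq_bigr => i _.
by rewrite mulnDl -addnA -addnS.
Qed.

Lemma block_cardDm m d (A : {set 'I_(m * d)}) j :
  block_card A d (j + m) = block_card A d j.
Proof.
by apply: eq_bigr => i _; rewrite mulnDl addnAC inmodDr.
Qed.

Lemma scycle_odd_quotient k s m q (A : {set 'I_(m * (k - s))}) :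
  0 < k <= m * (k - s) -> k = q * (k - s) ->
  (forall j, odd #|scycle_edge k s m j :&: A|) -> odd (q %/ gcdn q m).
Proof.
move=> kn kE odd_A; pose f := block_card A (k - s).
have odd_window j : odd (\sum_(r < q) f (j + r)).
  by rewrite -(card_scycle_edge_blocks j A kn kE).
have Pm : periodic (fun j => odd (f j)) m by move=> j; rewrite /f block_cardDm.
apply: odd_window_quotient (periodic_gcdn (odd_windows_periodic odd_window) Pm) _ _.
  exact: dvdn_gcdl.
by have := odd_window 0; under eq_bigr do rewrite add0n.
Qed.

Lemma sum_dvdn_window p a k : 0 < p ->
  \sum_(i < k) (p %| a + i.+1) = (a + k) %/ p - a %/ p.
Proof.
move=> p_gt0; elim: k => [|k IH]; first by rewrite big_ord0 addn0 subnn.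
rewrite big_ord_recr /= IH addnS divnS //.
have : a %/ p <= (a + k) %/ p by rewrite leq_div2r ?leq_addr.
lia.
Qed.

Lemma card_scycle_edge_multiples k s m p j :
  0 < k <= m * (k - s) -> p %| m * (k - s) -> p %| k ->
  #|scycle_edge k s m j :&: [set v : 'I_(m * (k - s)) | p %| v]| = k %/ p.
Proof.
move=> kn pn pk; have /andP[k_gt0 _] := kn.
have p_gt0 : 0 < p by apply: contraTltn pk; rewrite leqn0 => /eqP ->; rewrite dvd0n -lt0n.
have n_gt0 : 0 < m * (k - s) by case/andP: kn => /leq_trans; apply.
rewrite card_scycle_edgeI //.
under eq_bigr => i _ do
  rewrite (inmodE _ (v := Ordinal (ltn_pmod (j * (k - s) + i.+1) n_gt0))) // inE /=
          /dvdn (modn_dvdm _ pn).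
by rewrite sum_dvdn_window // addnC divnDl // addnK.
Qed.

Theorem theorem4p1 (k s m q t0 l0 : nat) :
  ~~ odd k ->
  1 <= s <= k - 1 ->
  2 * k - s <= m * (k - s) ->
  k = q * (k - s) ->
  q = 2 ^ t0 * (2 * l0 + 1) ->
  odd_bipartite (scycle k s m) <-> 2 ^ t0 %| m.
Proof.
move=> even_k /andP[s_gt0 s_lt_k] n_ge kE qE.
have kn : 0 < k <= m * (k - s) by apply/andP; split; lia.
rewrite scycle_odd_bipartiteP //; split=> [[A odd_A] | dvd_m].
- apply: dvdn_trans (dvdn_gcdr q m).
  apply: (@pow2_dvdn_odd_quotient _ q); first by rewrite qE dvdn_mulr.
    exact: dvdn_gcdl.
  exact: scycle_odd_quotient kE odd_A.
set p := 2 ^ t0 * (k - s).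
have kp : k = p * (2 * l0 + 1) by rewrite /p {1}kE qE mulnAC.
have p_gt0 : 0 < p by rewrite muln_gt0 expn_gt0 /=; lia.
exists [set v : 'I_(m * (k - s)) | p %| v] => j.
rewrite card_scycle_edge_multiples ?dvdn_mul //; last by rewrite kp dvdn_mulr.
by rewrite {1}kp mulKn // oddD oddM.
Qed.
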